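(* There is an absolute constant $\delta>0$ such that the following holds. For $A\ge1$ and $y\ge1$ define \[ f_A(y)=\delta\min\Big\{\frac{\big(\operatorname{Log}_2 y-\frac{\operatorname{Log} A}{\log 4-1}\big)^2}{\operatorname{Log} A},\ \operatorname{Log} A+\operatorname{Log}_2 y\Big\}, \] and for $x>1$ let $\mathcal{S}^A_{<x}$ be the set of $n\in\mathcal{S}_{<x}$ such that \[ \tau(n_{<y})\le A\,e^{-f_A(y)}\operatorname{Log} y\quad\text{for all } y\in[1,x]. \] Then for all $A\ge1$ and $x>1$, \[ \sum_{n\in\mathcal{S}_{<x}\setminus\mathcal{S}^A_{<x}}\frac1n\ll\frac{\operatorname{Log} x}{A}, \] with an absolute implied constant.
   Context: $\operatorname{Log} x=\max\{1,\log x\}$, $\operatorname{Log}_2 x=\operatorname{Log}(\operatorname{Log} x)$. $\tau(n)$ is the number of divisors of $n$. For $x\ge1$, $\mathcal{S}_{<x}$ is the set of square-free natural numbers all of whose prime factors are $<x$ (including $1$). For $n\in\mathcal{S}_{<x}$ and $1\le y\le x$, $n_{<y}$ denotes the product of the prime factors of $n$ that are $<y$ (so $n=n_{<y}n_{\ge y}$ with $n_{\ge y}$ having all prime factors in $[y,x)$). *)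

From Stdlib Require Import Reals ZArith.
From mathcomp Require Import all_boot.
From mathcomp Require Import boolp.

Set Implicit Arguments.
Unset Strict Implicit.
Unset Printing Implicit Defensive.

Local Open Scope R_scope.

Definition Log (x : R) : R := Rmax 1 (ln x).
Definition Log2 (x : R) : R := Log (Log x).

Definition tau (n : nat) : nat := size (divisors n).

Definition squarefree (n : nat) : Prop :=
  (0 < n)%N /\ forall p : nat, prime p -> ~~ (p * p %| n)%N.

Definition S_lt (x : R) (n : nat) : Prop :=
  squarefree n /\ forall p : nat, prime p -> (p %| n)%N -> INR p < x.

Definition part_lt (n : nat) (y : R) : nat :=
  \prod_(p <- primes n | if Rlt_dec (INR p) y then true else false) p.

Definition fA (delta A y : R) : R :=
  delta * Rmin ((Log2 y - Log A / (ln 4 - 1)) ^ 2 / Log A) (Log A + Log2 y).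

Definition S_A_lt (delta A x : R) (n : nat) : Prop :=
  S_lt x n /\
  forall y : R, 1 <= y <= x ->
    INR (tau (part_lt n y)) <= A * exp (- fA delta A y) * Log y.

(* A bound on the elements of S_{<x}: every n in S_{<x} divides the product
   of the primes < x, hence n <= K! with K = up x (the integer > x). *)
Definition S_bound (x : R) : nat := (Z.to_nat (up x))`!.+1.

(* sum of 1/n over n in S_{<x} \ S^A_{<x} (a finite set, contained in
   [0, S_bound x)) *)
Definition exc_sum (delta A x : R) : R :=
  foldr Rplus 0
    (map (fun n : nat => / INR n)
       (filter (fun n : nat => `[< S_lt x n /\ ~ S_A_lt delta A x n >])
          (iota 0 (S_bound x)))).

From Stdlib Require Import Reals Lra ZArith Lia Classical.
From mathcomp Require Import all_boot zify boolp.
Set Implicit Arguments. Unset Strict Implicit. Unset Printing Implicit Defensive.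

(* Write omega_y(n) for the number of prime factors of n below y, so that
   tau(n_{<y}) = 2^omega_y(n).  For a parameter a >= 1, the quantity
   M_y(n) = prod_{p < y} a^[p | n] / E_p, with E_p = (1 + a/p)/(1 + 1/p), is a
   multiplicative martingale in y for the weights 1/n on the divisors of
   prod_{p < x} p, and Ville's maximal inequality bounds the weight of the n
   with sup_y M_y(n) >= lam by (1/lam) prod_{p < x} (1 + 1/p).
   Taking a = 2^s, n exceptional at scale y makes M_y(n) large as soon as a
   "tilt condition" on (s, y) holds; Mertens' theorem bounds the normalizer
   prod E_p.  We use s = 1/2 when Log_2 y >= 7 Log A, and otherwise cut
   Log_2 y - Log A/(log 4 - 1) into bands of width sqrt(Log A): band k uses
   s = 1 -+ theta_k and gains a factor e^{-gamma k^2}.  A union bound over the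
   events and a geometric series give the bound C prod_{p<x}(1 + 1/p) / A,
   and Mertens' theorem turns the Euler product into O(Log x). *)

Fixpoint primorial (n : nat) : nat :=
  if n is k.+1 then primorial k * (if prime k.+1 then k.+1 else 1) else 1.

Lemma primorial_gt0 n : 0 < primorial n.
Proof. elim: n => //= n IH; rewrite muln_gt0 IH /=; case: ifP => // /prime_gt0. Qed.

Lemma prime_dvd_primorial q n : prime q -> q %| primorial n -> q <= n.
Proof.
move=> pq; elim: n => [|n IH] /=; first by rewrite Euclid_dvd1.
rewrite Euclid_dvdM // => /orP[h|h]; first by apply: leq_trans (IH h) _.
case: ifP h => _ h; last by rewrite Euclid_dvd1 in h.
by apply: dvdn_leq.
Qed.

Lemma prime_dvd_fact p j : prime p -> p %| j`! -> p <= j.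
Proof.
move=> pp; elim: j => [|j IH]; first by rewrite fact0 Euclid_dvd1.
rewrite factS Euclid_dvdM // => /orP[h|h]; first by apply: dvdn_leq.
by apply: leq_trans (IH h) _.
Qed.

(* Every prime in (m+1, k] divides the middle binomial 'C(2m+1, m), because it
   divides the numerator (2m+1)! but neither m! nor (m+1)!. *)
Lemma primorial_dvd_binom m k : m.+1 <= k <= (m.*2).+1 ->
  primorial k %| primorial m.+1 * 'C((m.*2).+1, m).
Proof.
elim: k => [|k IH] /andP[h1 h2]; first by [].
have [e|ne] := eqVneq k.+1 m.+1; first by rewrite e dvdn_mulr.
have hk : m.+1 <= k <= (m.*2).+1 by apply/andP; split; lia.
rewrite /=; case: ifP => pk; last by rewrite muln1; apply: IH.
rewrite Gauss_dvd; last first.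
  rewrite coprime_sym prime_coprime //; apply/negP => /(prime_dvd_primorial pk); lia.
rewrite IH //=; apply: dvdn_mull.
have hd : k.+1 %| ((m.*2).+1)`! by apply: dvdn_fact; lia.
move: hd; rewrite -(@bin_fact _ m) ?Gauss_dvdl ?prime_coprime ?Euclid_dvdM //; last lia.
by apply/negP => /orP[/(prime_dvd_fact pk)|/(prime_dvd_fact pk)]; lia.
Qed.

Lemma bin_le_pow2 n k : 'C(n, k) <= 2 ^ n.
Proof.
elim: n k => [|n IH] [|k] //=; first by rewrite bin0 expn_gt0.
by rewrite binS expnS mul2n -addnn; apply: leq_add; apply: IH.
Qed.

Lemma primorial_nonprime n : ~~ prime n.+1 -> primorial n.+1 = primorial n.
Proof. by move=> np; rewrite /= (negbTE np) muln1. Qed.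

Lemma primorial_le n : primorial n <= 8 ^ n.
Proof.
elim: n {-2}n (leqnn n) => [|N IH] n hn; first by have -> : n = 0 by lia.
case: n hn => [|n] hn; first by [].
have [m hm] : exists m, n = m.*2 \/ n = m.*2.+1.
  exists n./2; have := odd_double_half n.
  by case: (odd n) => /= e; [right | left]; lia.
case: hm => -> in hn *.
- case: m hn => [|m] hn; first by [].
  have hpos : 0 < primorial m.+2 * 'C((m.+1).*2.+1, m.+1).
    by rewrite muln_gt0 primorial_gt0 bin_gt0; lia.
  have hdiv := @primorial_dvd_binom m.+1 (m.+1).*2.+1 ltac:(apply/andP; split; lia).
  apply: leq_trans (dvdn_leq hpos hdiv) _.
  apply: leq_trans (leq_mul (IH m.+2 ltac:(lia)) (bin_le_pow2 _ _)) _.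
  rewrite (_ : 8 ^ (m.+1).*2.+1 = 8 ^ m.+2 * 2 ^ (3 * m.+1)); last first.
    by rewrite expnM -expnD; congr (_ ^ _); lia.
  by rewrite leq_mul2l leq_exp2l //; lia.
- case: m hn => [|m] hn; first by [].
  have np : ~~ prime (m.+1).*2.+2.
    apply/negP => /primeP[_ /(_ 2)]; rewrite -doubleS -mul2n dvdn_mulr //.
    by move/(_ isT); lia.
  rewrite (primorial_nonprime np); apply: leq_trans (IH (m.+1).*2.+1 ltac:(lia)) _.
  by rewrite leq_exp2l.
Qed.

(* prime_power_part N M = prod_{p <= M} p^(N/p), a divisor of N! by Legendre. *)
Fixpoint prime_power_part (N M : nat) : nat :=
  if M is k.+1
  then prime_power_part N k * (if prime k.+1 then k.+1 ^ (N %/ k.+1) else 1)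
  else 1.

Lemma prime_power_part_gt0 N M : 0 < prime_power_part N M.
Proof.
elim: M => //= M IH; rewrite muln_gt0 IH /=; case: ifP => // /prime_gt0 h.
by rewrite expn_gt0 h.
Qed.

Lemma prime_dvd_prime_power_part N q M :
  prime q -> q %| prime_power_part N M -> q <= M.
Proof.
move=> pq; elim: M => [|M IH] /=; first by rewrite Euclid_dvd1.
rewrite Euclid_dvdM // => /orP[h|h]; first by apply: leq_trans (IH h) _.
case: ifP h => _ h; last by rewrite Euclid_dvd1 in h.
by rewrite Euclid_dvdX // in h; case/andP: h => h _; apply: dvdn_leq.
Qed.

Lemma prime_power_part_dvd_fact N M : prime_power_part N M %| N`!.
Proof.
elim: M => [|M IH] /=; first by rewrite dvd1n.
case: ifP => pk; last by rewrite muln1.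
rewrite Gauss_dvd; last first.
  rewrite coprime_sym; apply: coprimeXl; rewrite prime_coprime //.
  by apply/negP => /(prime_dvd_prime_power_part pk); rewrite ltnn.
rewrite IH /=.
case: N {IH} => [|N]; first by rewrite div0n expn0 dvd1n.
rewrite pfactor_dvdn ?fact_gt0 // logn_fact // big_ltn //.
by rewrite expn1 leq_addr.
Qed.

Lemma fact_le_pow n : n`! <= n ^ n.
Proof.
elim: n => // n IH; rewrite factS expnS leq_mul2l /=.
by apply: leq_trans IH _; case: n => // n; rewrite leq_exp2r.
Qed.

Lemma tau_mulp p m : prime p -> ~~ (p %| m) -> 0 < m -> tau (p * m) = (2 * tau m)%N.
Proof.
move=> pp npm m0; have p0 := prime_gt0 pp.
have pm0 : 0 < p * m by rewrite muln_gt0 p0.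
have hperm : perm_eq (divisors (p * m)) (divisors m ++ map (muln p) (divisors m)).
  apply: uniq_perm; first exact: divisors_uniq.
    rewrite cat_uniq divisors_uniq map_inj_uniq; last first.
      by move=> u v /eqP; rewrite eqn_pmul2l // => /eqP.
    rewrite divisors_uniq andbT /=.
    apply/hasPn => d /mapP[e ed ->]; rewrite -dvdn_divisors //.
    by apply/negP => h; move: npm; rewrite (dvdn_trans (dvdn_mulr _ (dvdnn p)) h).
  move=> d; rewrite mem_cat -!dvdn_divisors //; apply/idP/idP.
    move=> h; have [pd|npd] := boolP (p %| d).
      apply/orP; right; apply/mapP; exists (d %/ p); last by rewrite mulnC divnK.
      by rewrite -dvdn_divisors // -(dvdn_pmul2l p0) (mulnC p) divnK.
    by apply/orP; left; move: h; rewrite Gauss_dvdr // coprime_sym prime_coprime.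
  case/orP=> [h|/mapP[e]]; first exact: dvdn_mull.
  by rewrite -dvdn_divisors // => h ->; rewrite dvdn_pmul2l.
by rewrite /tau (perm_size hperm) size_cat size_map addnn -mul2n.
Qed.

Lemma prime_dvd_prod p l : prime p -> (p %| \prod_(q <- l) q)%N ->
  exists2 q, q \in l & (p %| q)%N.
Proof.
move=> pp; elim: l => [|q l IH]; first by rewrite big_nil Euclid_dvd1.
rewrite big_cons Euclid_dvdM // => /orP[h|/IH[r rl h]].
  by exists q => //; rewrite mem_head.
by exists r => //; rewrite inE rl orbT.
Qed.

Lemma tau_prod l : uniq l -> all prime l -> tau (\prod_(q <- l) q) = (2 ^ size l)%N.
Proof.
elim: l => [|p l IH]; first by rewrite big_nil.
case/andP=> pl ul /andP[pp pr].
rewrite big_cons tau_mulp //; first by rewrite IH // expnS.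
  apply/negP => /(prime_dvd_prod pp)[q ql].
  rewrite dvdn_prime2 // ?(allP pr q ql) // => /eqP e.
  by rewrite e ql in pl.
by rewrite big_seq; apply: prodn_cond_gt0 => i /(allP pr)/prime_gt0.
Qed.

Local Open Scope R_scope.

Lemma INR_muln m n : INR (m * n)%N = INR m * INR n.
Proof. exact: mult_INR. Qed.

Lemma INR_expn m n : INR (m ^ n)%N = INR m ^ n.
Proof. by elim: n => [|n IH] //; rewrite expnS INR_muln IH. Qed.

Lemma INR_gt0 n : (0 < n)%N -> 0 < INR n.
Proof. by move=> h; apply: lt_0_INR; apply/ltP. Qed.

Lemma INR_leq m n : (m <= n)%N -> INR m <= INR n.
Proof. by move=> h; apply: le_INR; apply/leP. Qed.

Lemma inv_INR_ge0 n : 0 <= / INR n.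
Proof.
case: n => [|n]; first by rewrite /= Rinv_0; lra.
by apply: Rlt_le; apply: Rinv_0_lt_compat; apply: INR_gt0.
Qed.

Lemma ln_le x y : 0 < x -> x <= y -> ln x <= ln y.
Proof. by move=> hx [h|->]; [left; apply: ln_increasing | right]. Qed.

Lemma exp_le x y : x <= y -> exp x <= exp y.
Proof. by case=> h; [left; apply: exp_increasing | right; rewrite h]. Qed.

Lemma exp_pow_nat x k : exp x ^ k = exp (INR k * x).
Proof.
elim: k => [|k IH]; first by rewrite /= Rmult_0_l exp_0.
by rewrite [exp x ^ k.+1]/= IH S_INR -exp_plus; f_equal; ring.
Qed.

Lemma INR_le_sq k : INR k <= INR k ^ 2.
Proof. by case: k => [|k]; [rewrite /=; lra | have := pos_INR k; rewrite S_INR; nra]. Qed.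

Lemma ln2_pos : 0 < ln 2.
Proof. rewrite -ln_1; apply: ln_increasing; lra. Qed.

Lemma ln_nat_ge_ln2 N : (2 <= N)%N -> ln 2 <= ln (INR N).
Proof. by move=> h; apply: ln_le; [lra | apply: (@INR_leq 2)]. Qed.

(* The bound 1 - a/b <= ln b - ln a, i.e. ln u <= u - 1 at u = a/b. *)
Lemma ln_ratio a b : 0 < a -> 0 < b -> 1 - a / b <= ln b - ln a.
Proof.
move=> ha hb; have h := exp_ineq1_le (ln (a / b)).
rewrite exp_ln in h; last by apply: Rdiv_lt_0_compat.
rewrite /Rdiv ln_mult ?ln_Rinv in h; try lra; by apply: Rinv_0_lt_compat.
Qed.

Fixpoint mertens_log_sum (M : nat) : R :=
  if M is k.+1
  then mertens_log_sum k + (if prime k.+1 then ln (INR k.+1) / INR k.+1 else 0)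
  else 0.

Lemma mertens_log_sumS k : mertens_log_sum k.+1
  = mertens_log_sum k + (if prime k.+1 then ln (INR k.+1) / INR k.+1 else 0).
Proof. by []. Qed.

Lemma mertens_log_sum_ge0 N : 0 <= mertens_log_sum N.
Proof.
elim: N => [|N IH]; first by rewrite /=; lra.
rewrite mertens_log_sumS; case: ifP => _; last lra.
have : 0 <= ln (INR N.+1) / INR N.+1.
  apply: Rmult_le_pos; last by apply: inv_INR_ge0.
  by rewrite -ln_1; apply: ln_le; [lra | apply: (@INR_leq 1)].
lra.
Qed.

(* Comparing ln of prime_power_part N M with N * mertens_log_sum M: each
   prime p <= M contributes ln p * (N/p) >= ln p * (N/p - 1). *)
Lemma mertens_log_sum_vs_factorial N M :
  INR N * mertens_log_sum M - ln (INR (primorial M))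
  <= ln (INR (prime_power_part N M)).
Proof.
elim: M => [|M IH]; first by rewrite /= ln_1; lra.
rewrite mertens_log_sumS [primorial _]/= [prime_power_part _ _]/=.
case: ifP => pk; last by rewrite !muln1; lra.
have p0 : 0 < INR M.+1 by apply: INR_gt0.
have t0 := INR_gt0 (primorial_gt0 M).
have q0 := INR_gt0 (prime_power_part_gt0 N M).
have e0 : 0 < INR (M.+1 ^ (N %/ M.+1)) by apply: INR_gt0; rewrite expn_gt0.
rewrite !INR_muln ln_mult // ln_mult // INR_expn ln_pow //.
have hlp : 0 <= ln (INR M.+1) by rewrite -ln_1; apply: ln_le; [lra | apply: (@INR_leq 1)].
have hd : INR N / INR M.+1 - 1 <= INR (N %/ M.+1).
  have : INR N <= INR (N %/ M.+1) * INR M.+1 + INR M.+1.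
    rewrite -mult_INR -plus_INR; apply: INR_leq.
    by have := divn_eq N M.+1; have := ltn_pmod N (ltn0Sn M); lia.
  move=> h; apply/(Rmult_le_reg_r (INR M.+1)) => //.
  rewrite Rmult_minus_distr_r /Rdiv Rmult_assoc Rinv_l; lra.
have := Rmult_le_compat_r _ _ _ hlp hd.
rewrite /Rdiv; nra.
Qed.

(* Mertens' first theorem (upper bound): sum_{p <= N} ln p / p <= ln N + ln 8.
   Combine the previous lemma with N! <= N^N and Chebyshev's bound. *)
Lemma mertens_log_sum_le N : (0 < N)%N -> mertens_log_sum N <= ln (INR N) + ln 8.
Proof.
move=> hN; have k := mertens_log_sum_vs_factorial N N.
have n0 : 0 < INR N := INR_gt0 hN.
have h1 : ln (INR (prime_power_part N N)) <= INR N * ln (INR N).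
  rewrite -ln_pow //; apply: ln_le; first exact: INR_gt0 (prime_power_part_gt0 _ _).
  rewrite -INR_expn; apply: INR_leq; apply: leq_trans (fact_le_pow N).
  exact: dvdn_leq (fact_gt0 _) (prime_power_part_dvd_fact _ _).
have h2 : ln (INR (primorial N)) <= INR N * ln 8.
  rewrite -ln_pow; last lra.
  apply: ln_le; first exact: INR_gt0 (primorial_gt0 _).
  rewrite (_ : 8 = INR 8); last by rewrite /=; lra.
  by rewrite -INR_expn; apply: INR_leq; apply: primorial_le.
by apply: (Rmult_le_reg_l (INR N)) => //; lra.
Qed.

Fixpoint inv_prime_sum (M : nat) : R :=
  if M is k.+1 then inv_prime_sum k + (if prime k.+1 then / INR k.+1 else 0) else 0.

Lemma inv_prime_sumS k :
  inv_prime_sum k.+1 = inv_prime_sum k + (if prime k.+1 then / INR k.+1 else 0).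
Proof. by []. Qed.

(* The Abel-summation quantity sum 1/p - (sum ln p/p)/ln N does not change
   when N+1 is added, once the weight 1/ln is frozen at N+1. *)
Lemma abel_step N : (1 < N)%N ->
  inv_prime_sum N.+1 - mertens_log_sum N.+1 / ln (INR N.+1)
  = inv_prime_sum N - mertens_log_sum N / ln (INR N.+1).
Proof.
move=> hN; rewrite inv_prime_sumS mertens_log_sumS; case: ifP => _; last by rewrite !Rplus_0_r.
have hp : INR N.+1 <> 0 by apply: not_0_INR.
have hq : ln (INR N.+1) <> 0.
  by have := ln_nat_ge_ln2 (ltac:(lia) : (2 <= N.+1)%N); have := ln2_pos; lra.
by field.
Qed.

Lemma abel_bound N : (2 <= N)%N ->
  inv_prime_sum N - mertens_log_sum N / ln (INR N) <=
  ln (ln (INR N)) - ln (ln 2) + ln 8 / ln 2 - ln 8 / ln (INR N).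
Proof.
have l2 := ln2_pos.
elim: N => [//|N IH] hN.
have [->|hN2] := eqVneq N 1%N.
  rewrite /= (_ : 1 + 1 = 2); last lra.
  by rewrite (_ : (0 + 0 + ln 2 / 2) / ln 2 = / 2); [lra | field; lra].
have hN' : (2 <= N)%N by lia.
have {}IH := IH hN'.
have lN := ln_nat_ge_ln2 hN'.
have hlt : ln (INR N) < ln (INR N.+1).
  by apply: ln_increasing; [apply: INR_gt0; lia | rewrite S_INR; lra].
have hSl := mertens_log_sum_le (ltac:(lia) : (0 < N)%N).
rewrite abel_step; last lia.
have hr := ln_ratio (ltac:(lra) : 0 < ln (INR N)) (ltac:(lra) : 0 < ln (INR N.+1)).
have hd : 0 <= / ln (INR N) - / ln (INR N.+1).
  suff : / ln (INR N.+1) <= / ln (INR N) by lra.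
  by apply: Rinv_le_contravar; lra.
have : mertens_log_sum N * (/ ln (INR N) - / ln (INR N.+1)) <=
       (ln (INR N) + ln 8) * (/ ln (INR N) - / ln (INR N.+1)).
  exact: Rmult_le_compat_r.
have e1 : ln (INR N) * (/ ln (INR N) - / ln (INR N.+1))
          = 1 - ln (INR N) / ln (INR N.+1) by field; lra.
have := mertens_log_sum_ge0 N.
rewrite /Rdiv in IH hr e1 *; nra.
Qed.

Definition mertens_const := 1 - ln (ln 2) + ln 8 / ln 2.

Lemma ln2_lt1 : ln 2 < 1.
Proof.
rewrite -(ln_exp 1); apply: ln_increasing; first lra.
by have := exp_ineq1 1 ltac:(lra); lra.
Qed.

Lemma mertens_const_ge0 : 0 <= mertens_const.
Proof.
have l2 := ln2_pos; have l1 := ln2_lt1.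
have : ln (ln 2) < 0 by rewrite -ln_1; apply: ln_increasing.
have : 0 < ln 8 / ln 2.
  by apply: Rdiv_lt_0_compat => //; rewrite -ln_1; apply: ln_increasing; lra.
rewrite /mertens_const; lra.
Qed.

Lemma inv_prime_sum_le N : (2 <= N)%N ->
  inv_prime_sum N <= ln (ln (INR N)) + mertens_const.
Proof.
move=> hN; have T := abel_bound hN.
have lN := ln_nat_ge_ln2 hN; have l2 := ln2_pos.
have hSl := mertens_log_sum_le (ltac:(lia) : (0 < N)%N).
have : mertens_log_sum N / ln (INR N) <= (ln (INR N) + ln 8) / ln (INR N).
  by apply: Rmult_le_compat_r; first by left; apply: Rinv_0_lt_compat; lra.
have -> : (ln (INR N) + ln 8) / ln (INR N) = 1 + ln 8 / ln (INR N) by field; lra.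
rewrite /mertens_const; lra.
Qed.

Definition sumR (l : seq nat) (f : nat -> R) : R :=
  foldr (fun q acc => f q + acc) 0 l.
Definition prodR (l : seq nat) (g : nat -> R) : R :=
  foldr (fun q acc => g q * acc) 1 l.

Lemma sumR_rem x l f : x \in l -> sumR l f = f x + sumR (rem x l) f.
Proof.
elim: l => [//|y l IH]; rewrite inE /= => /orP[/eqP->|h]; first by rewrite eqxx.
by case: eqP => [->//|_]; rewrite /= IH //; lra.
Qed.

Lemma sumR_ext_in l f g : (forall n, n \in l -> f n = g n) -> sumR l f = sumR l g.
Proof.
elim: l => [|q l IH] h //=; rewrite h ?mem_head // IH // => n hn.
by apply: h; rewrite inE hn orbT.
Qed.

Lemma sumR_split l f (a : pred nat) :
  sumR l f = sumR (filter a l) f + sumR (filter (predC a) l) f.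
Proof. elim: l => [|q l IH] /=; first lra. by case: (a q) => /=; rewrite IH; lra. Qed.

Lemma sumR_map l f g : sumR (map g l) f = sumR l (fun n => f (g n)).
Proof. by elim: l => [|q l IH] //=; rewrite IH. Qed.

Lemma foldr_sumR l f : foldr Rplus 0 (map f l) = sumR l f.
Proof. by elim: l => [|a l IH] //=; rewrite IH. Qed.

Lemma sumR_ge0 l f : (forall q, q \in l -> 0 <= f q) -> 0 <= sumR l f.
Proof.
elim: l => [|y l IH] h /=; first lra.
have : 0 <= sumR l f by apply: IH => q hq; apply: h; rewrite inE hq orbT.
have := h y (mem_head _ _).
lra.
Qed.

Lemma sumR_le l f g : (forall q, q \in l -> f q <= g q) -> sumR l f <= sumR l g.
Proof.
elim: l => [|y l IH] h /=; first lra.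
have : sumR l f <= sumR l g by apply: IH => q hq; apply: h; rewrite inE hq orbT.
have := h y (mem_head _ _).
lra.
Qed.

Lemma sumR_scale l c f : sumR l (fun k => c * f k) = c * sumR l f.
Proof. by elim: l => [|y l IH] /=; [ring | rewrite IH; ring]. Qed.

Lemma sumR_geom K q : 0 <= q < 1 -> sumR (iota 0 K) (pow q) <= / (1 - q).
Proof.
move=> hq.
have e m : sumR (iota m K) (pow q) * (1 - q) = q ^ m - q ^ (m + K).
  elim: K m => [|K IH] m /=; first by rewrite addn0; ring.
  by rewrite Rmult_plus_distr_r IH addSnnS [q ^ m.+1]/=; ring.
have p0 : 0 <= q ^ (0 + K) by apply: pow_le; lra.
apply: (Rmult_le_reg_r (1 - q)); first lra.
by rewrite e Rinv_l; rewrite /=; lra.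
Qed.

Lemma sumR_inv_primes_le M l : uniq l ->
  (forall q, q \in l -> prime q /\ (q <= M)%N) ->
  sumR l (fun q => / INR q) <= inv_prime_sum M.
Proof.
elim: M l => [|M IH] l ul hl.
  case: l ul hl => [|q l] ul hl; first by rewrite /=; lra.
  by have [/prime_gt0 h1 h2] := hl q (mem_head _ _); lia.
rewrite inv_prime_sumS.
have [inl|ninl] := boolP (M.+1 \in l).
  rewrite (sumR_rem _ inl); have [-> _] := hl _ inl.
  suff : sumR (rem M.+1 l) (fun q => / INR q) <= inv_prime_sum M by lra.
  apply: IH; first exact: rem_uniq.
  move=> q; rewrite (mem_rem_uniq _ ul) inE => /andP[hq ql].
  by have [pq qM] := hl q ql; split => //; move/eqP: hq; lia.
have : sumR l (fun q => / INR q) <= inv_prime_sum M.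
  apply: IH => // q ql; have [pq qM] := hl q ql; split => //.
  have : q != M.+1 by apply/eqP => e; rewrite -e ql in ninl.
  by move/eqP; lia.
by case: ifP => _; have := inv_INR_ge0 M.+1; lra.
Qed.

Lemma floor_ex y : 0 <= y -> exists M : nat, INR M <= y < INR M + 1.
Proof.
move=> hy; have [h1 h2] := archimed y.
have : (0 < up y)%Z by apply: lt_IZR; lra.
move=> hz; have {}hz : (0 <= up y - 1)%Z by lia.
exists (Z.to_nat (up y - 1)).
by rewrite INR_IZR_INZ Z2Nat.id // minus_IZR /=; lra.
Qed.

Lemma Log_ge1 y : 1 <= Log y.
Proof. exact: Rmax_l. Qed.

Lemma lnLog_ge0 y : 0 <= ln (Log y).
Proof. by rewrite -ln_1; apply: ln_le; [lra | apply: Log_ge1]. Qed.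

Lemma sum_inv_primes_below y l : 1 <= y -> uniq l ->
  (forall q, q \in l -> prime q /\ INR q < y) ->
  sumR l (fun q => / INR q) <= ln (Log y) + mertens_const.
Proof.
move=> hy ul hl.
have [M [hM1 hM2]] := floor_ex (ltac:(lra) : 0 <= y).
have hlM : forall q, q \in l -> prime q /\ (q <= M)%N.
  move=> q ql; have [pq qy] := hl q ql; split => //.
  have : INR q < INR M.+1 by rewrite S_INR; lra.
  by move/INR_lt/ltP.
have h := sumR_inv_primes_le ul hlM.
have B := mertens_const_ge0; have L0 := lnLog_ge0 y.
case: (leqP 2 M) => hM.
  have : ln (ln (INR M)) <= ln (Log y).
    have := ln2_pos; have := ln_nat_ge_ln2 hM => lN l2.
    apply: ln_le; first lra.
    apply: Rle_trans (Rmax_r 1 (ln y)).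
    by apply: ln_le => //; apply: INR_gt0; lia.
  by have := inv_prime_sum_le hM; lra.
case: l ul hl hlM h => [|q l] ul hl hlM h; first by rewrite /=; lra.
by have [/prime_gt1 h1 h2] := hlM q (mem_head _ _); lia.
Qed.

Definition indicator (P : Prop) : R := if `[< P >] then 1 else 0.

Lemma indicator_ge0 P : 0 <= indicator P.
Proof. by rewrite /indicator; case: ifP => _; lra. Qed.

Lemma indicator_le1 P : indicator P <= 1.
Proof. by rewrite /indicator; case: ifP => _; lra. Qed.

Lemma indicator_T (P : Prop) : P -> indicator P = 1.
Proof. by move=> h; rewrite /indicator asboolT. Qed.

Lemma indicator_F (P : Prop) : ~ P -> indicator P = 0.
Proof. by move=> h; rewrite /indicator asboolF. Qed.

Lemma indicator_imp (P Q : Prop) : (P -> Q) -> indicator P <= indicator Q.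
Proof.
move=> h; rewrite /indicator.
by case: (asboolP P) => hp; case: (asboolP Q) => hq; try lra; case: hq; apply: h.
Qed.

(* sqf_sum ps F = sum of F d over the divisors d of the product of the list
   ps (the squarefree numbers built from ps, when ps is a list of distinct
   primes), defined by splitting on whether the head prime divides d. *)
Fixpoint sqf_sum (ps : seq nat) (F : nat -> R) : R :=
  if ps is p :: ps' then sqf_sum ps' F + sqf_sum ps' (fun n => F (p * n)%N)
  else F 1%N.

Definition supported_on (ps : seq nat) (n : nat) : Prop :=
  forall q, prime q -> (q %| n)%N -> q \in ps.

Lemma sqf_sum_le ps F G : all prime ps ->
  (forall n, supported_on ps n -> F n <= G n) -> sqf_sum ps F <= sqf_sum ps G.
Proof.
elim: ps F G => [|p ps IH] F G /= hps h.
  by apply: h => q pq; rewrite dvdn1 => /eqP e; rewrite e in pq.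
case/andP: hps => pp hps.
apply: Rplus_le_compat; apply: IH => // n hn; apply: h => q pq.
  by move=> /(hn q pq) qi; rewrite inE qi orbT.
rewrite Euclid_dvdM // => /orP[h1|h1].
  by rewrite (dvdn_prime2 pq pp) in h1; rewrite inE h1.
by rewrite inE (hn q pq h1) orbT.
Qed.

Lemma sqf_sum_add ps F G :
  sqf_sum ps (fun n => F n + G n) = sqf_sum ps F + sqf_sum ps G.
Proof. by elim: ps F G => [|p ps IH] F G //=; rewrite !IH; lra. Qed.

Lemma sqf_sum_scale ps k F : sqf_sum ps (fun n => k * F n) = k * sqf_sum ps F.
Proof. by elim: ps F => [|p ps IH] F //=; rewrite !IH; lra. Qed.

Lemma sqf_sum_ext ps F G : (forall n, F n = G n) -> sqf_sum ps F = sqf_sum ps G.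
Proof.
elim: ps F G => [|p ps IH] F G h //=.
by rewrite (IH F G h) (IH (fun n => F (p * n)%N) (fun n => G (p * n)%N)).
Qed.

Lemma sqf_sum_sumR ps l h :
  sqf_sum ps (fun n => sumR l (fun k => h k n)) = sumR l (fun k => sqf_sum ps (h k)).
Proof.
elim: l => [|k l IH] /=; last by rewrite sqf_sum_add IH.
by elim: ps => [|p ps IHp] //=; rewrite IHp; ring.
Qed.

Lemma sqf_sum_inv ps : sqf_sum ps (fun n => / INR n) = prodR ps (fun p => 1 + / INR p).
Proof.
elim: ps => [|p ps IH] /=; first lra.
have -> : sqf_sum ps (fun n => / INR (p * n)%N) = / INR p * sqf_sum ps (fun n => / INR n).
  by rewrite -sqf_sum_scale; apply: sqf_sum_ext => n; rewrite INR_muln Rinv_mult.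
by rewrite IH; lra.
Qed.

Lemma prodR_ge1 ps : all prime ps -> 1 <= prodR ps (fun p => 1 + / INR p).
Proof.
elim: ps => [|p ps IH] /=; first lra.
case/andP=> /prime_gt0/INR_gt0/Rinv_0_lt_compat pp /IH; nra.
Qed.

(* The Euler product is at most exp (sum 1/p), since 1 + u <= exp u. *)
Lemma prodR_le_exp ps : all prime ps ->
  prodR ps (fun p => 1 + / INR p) <= exp (sumR ps (fun q => / INR q)).
Proof.
elim: ps => [|p ps IH] /=; first by rewrite exp_0; lra.
case/andP=> pp hps; rewrite exp_plus; apply: Rmult_le_compat.
- by have := inv_INR_ge0 p; lra.
- by have := prodR_ge1 hps; lra.
- exact: exp_ineq1_le.
- exact: IH.
Qed.

Lemma squarefree_dvd m n : squarefree n -> (m %| n)%N -> squarefree m.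
Proof.
move=> [n0 hn] hd; split.
  by case: m hd => //; rewrite dvd0n => /eqP h; move: n0; rewrite h.
move=> p pp; apply/negP => h; move: (hn p pp) => /negP; apply.
exact: dvdn_trans h hd.
Qed.

Lemma supported_on_nil n : (0 < n)%N -> supported_on [::] n -> n = 1%N.
Proof.
move=> n0 hp; have [//|hn] : n = 1%N \/ (1 < n)%N by lia.
by have := hp (pdiv n) (pdiv_prime hn) (pdiv_dvd n).
Qed.

Lemma supported_on_div p ps n : prime p -> squarefree n ->
  supported_on (p :: ps) n -> (p %| n)%N ->
  squarefree (n %/ p) /\ supported_on ps (n %/ p).
Proof.
move=> pp sq hp pn; have dm : (n %/ p %| n)%N by apply: dvdn_div.
split; first exact: squarefree_dvd dm.
move=> q pq qm; have := hp q pq (dvdn_trans qm dm); rewrite inE => /orP[/eqP e|//].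
case: sq => _ /(_ p pp) /negP; case; move: qm; rewrite e => qm.
by rewrite -[X in (_ %| X)%N](divnK pn) dvdn_pmul2r ?prime_gt0.
Qed.

Lemma sumR_le_sqf_sum ps : all prime ps -> uniq ps -> forall l F,
  uniq l -> (forall n, n \in l -> squarefree n /\ supported_on ps n) ->
  (forall n, 0 <= F n) -> sumR l F <= sqf_sum ps F.
Proof.
elim: ps => [|p ps IH] hpr ups l F ul hl hF.
  have h1 n : n \in l -> n = 1%N.
    by move=> nl; have [[n0 _] hp] := hl n nl; apply: supported_on_nil.
  case: l ul hl h1 => [|a [|b l]] ul hl h1 /=.
  - exact: hF.
  - by rewrite (h1 a (mem_head _ _)); lra.
  by move: ul; rewrite /= (h1 a (mem_head _ _)) (h1 b) ?inE ?eqxx ?orbT.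
case/andP: hpr => pp hpr; case/andP: ups => pnps ups.
rewrite /= (@sumR_split l F (fun n => p %| n)%N) [X in X <= _]Rplus_comm.
apply: Rplus_le_compat.
  apply: IH => //; first exact: filter_uniq.
  move=> n; rewrite mem_filter /= => /andP[pn nl]; have [sq hp] := hl n nl.
  split => // q pq qn; have := hp q pq qn; rewrite inE => /orP[/eqP e|] //.
  by rewrite -e qn in pn.
set l1 := filter _ l.
have -> : sumR l1 F = sumR (map (fun n => n %/ p)%N l1) (fun m => F (p * m)%N).
  rewrite sumR_map; apply: sumR_ext_in => n; rewrite mem_filter => /andP[pn _].
  by rewrite mulnC divnK.
apply: IH => //.
- rewrite map_inj_in_uniq; first exact: filter_uniq.
  move=> u v; rewrite !mem_filter => /andP[pu _] /andP[pv _] e.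
  by rewrite -(divnK pu) -(divnK pv) e.
- move=> m /mapP[n]; rewrite mem_filter => /andP[pn nl] ->.
  by have [sq hp] := hl n nl; apply: supported_on_div.
Qed.

Definition below (q : nat) (y : R) : bool := if Rlt_dec (INR q) y then true else false.

Lemma belowP q y : below q y = true <-> INR q < y.
Proof. by rewrite /below; case: Rlt_dec. Qed.

Definition prod_below (l : seq nat) (y : R) (h : nat -> R) : R :=
  foldr (fun q acc => (if below q y then h q else 1) * acc) 1 l.

(* Under the weight 1/n, the factor a^[q | n] has mean (1 + a/q)/(1 + 1/q);
   mart_fac normalizes it, so that y |-> prod_below ps y (mart_fac a n) is a
   (multiplicative) martingale in y, started at 1. *)
Definition mean_fac (a : R) (q : nat) : R := 1 + (a - 1) / (INR q + 1).
Definition mart_fac (a : R) (n q : nat) : R :=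
  (if (q %| n)%N then a else 1) / mean_fac a q.

Lemma mean_fac_pos a q : 1 <= a -> 0 < mean_fac a q.
Proof.
move=> ha; rewrite /mean_fac.
have : 0 <= (a - 1) / (INR q + 1).
  apply: Rmult_le_pos; first lra.
  by apply: Rlt_le; apply: Rinv_0_lt_compat; have := pos_INR q; lra.
lra.
Qed.

(* The weights 1 and 1/p of the two choices for the head prime p give
   1 + a/p = mean_fac a p * (1 + 1/p). *)
Lemma mean_fac_identity a p : 0 < INR p -> 1 + a / INR p = mean_fac a p * (1 + / INR p).
Proof. by move=> hp; rewrite /mean_fac; field; lra. Qed.

Lemma prod_below_above l y h : (forall q, q \in l -> ~ INR q < y) -> prod_below l y h = 1.
Proof.
elim: l => [//|q l IH] hl /=.
rewrite IH; last by move=> r hr; apply: hl; rewrite inE hr orbT.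
rewrite /below; case: Rlt_dec => h1 /=; last lra.
by case: (hl q (mem_head _ _)).
Qed.

Lemma prod_below_ext l y h1 h2 :
  (forall q, q \in l -> h1 q = h2 q) -> prod_below l y h1 = prod_below l y h2.
Proof.
elim: l => [//|q l IH] hl /=.
rewrite IH; last by move=> r hr; apply: hl; rewrite inE hr orbT.
by rewrite hl ?mem_head.
Qed.

Definition exceeds (ps : seq nat) (a c lam : R) (n : nat) : Prop :=
  exists y, lam <= c * prod_below ps y (mart_fac a n).

Section HeadPrime.
(* p is a prime smaller than all the primes in ps, and c < lam, so at times
   y <= p the scaled martingale c * 1 has not reached lam. *)
Variables (p : nat) (ps : seq nat) (a c lam : R).
Hypotheses (pp : prime p) (hps : all prime ps) (hmin : forall q, q \in ps -> (p < q)%N).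
Hypothesis hcl : c < lam.

Let below_head_trivial y h : ~ INR p < y -> prod_below ps y h = 1.
Proof.
move=> hy; apply: prod_below_above => q /hmin /ltP /lt_INR; lra.
Qed.

(* For n coprime to p, the head factor is 1/mean_fac: absorb it into c. *)
Lemma exceeds_cons_coprime n : ~~ (p %| n)%N ->
  exceeds (p :: ps) a c lam n -> exceeds ps a (c / mean_fac a p) lam n.
Proof.
move=> pn [y hy]; exists y; move: hy; rewrite /= /below.
case: Rlt_dec => h1 /=; last by rewrite below_head_trivial //; lra.
by rewrite /mart_fac (negbTE pn) /Rdiv Rmult_1_l -Rmult_assoc.
Qed.

(* For p * n, the head factor is a/mean_fac and the other factors see n. *)
Lemma exceeds_cons_mul n : supported_on ps n ->
  exceeds (p :: ps) a c lam (p * n) -> exceeds ps a (c * a / mean_fac a p) lam n.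
Proof.
move=> hn [y hy]; exists y; move: hy; rewrite /= /below.
have -> : prod_below ps y (mart_fac a (p * n)) = prod_below ps y (mart_fac a n).
  apply: prod_below_ext => q hq; have pq := allP hps q hq.
  have qp : q != p by apply/eqP => e; have := hmin hq; rewrite e ltnn.
  by rewrite /mart_fac Euclid_dvdM // dvdn_prime2 // (negbTE qp).
case: Rlt_dec => h1 /=; last by rewrite below_head_trivial //; lra.
rewrite /mart_fac dvdn_mulr // /Rdiv => h; apply: Rle_trans h _; right; ring.
Qed.
End HeadPrime.

(* Any set of n | prod ps has weight at most prod (1 + 1/p); this settles
   the maximal inequality below when the level lam is at most c. *)
Lemma weight_le_above_level ps (E : nat -> Prop) c lam : all prime ps ->
  0 < lam -> lam <= c ->
  sqf_sum ps (fun n => indicator (E n) * / INR n) <= c / lam * prodR ps (fun p => 1 + / INR p).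
Proof.
move=> hps hl hcl.
have : 1 <= c / lam by apply: (Rmult_le_reg_r lam) => //; rewrite /Rdiv Rmult_assoc Rinv_l; lra.
have : sqf_sum ps (fun n => indicator (E n) * / INR n) <= prodR ps (fun p => 1 + / INR p).
  rewrite -sqf_sum_inv; apply: sqf_sum_le => // n _.
  by have := inv_INR_ge0 n; have := indicator_le1 (E n); have := indicator_ge0 (E n); nra.
by have := prodR_ge1 hps; nra.
Qed.

(* Induction on ps, splitting off its least prime. *)
Lemma maximal_inequality ps a lam : sorted ltn ps -> all prime ps -> 1 <= a -> 0 < lam ->
  forall c, 0 <= c ->
  sqf_sum ps (fun n => indicator (exceeds ps a c lam n) * / INR n)
  <= c / lam * prodR ps (fun p => 1 + / INR p).
Proof.
move=> + + ha hl; elim: ps => [|p ps IH] hs hpr c hc;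
  have [hcl|hcl] := Rle_lt_dec lam c; try exact: weight_le_above_level.
  have : 0 <= c / lam by apply: Rmult_le_pos => //; apply: Rlt_le; apply: Rinv_0_lt_compat.
  by rewrite /= Rinv_1 Rmult_1_r indicator_F; [lra | case=> y /=; lra].
have hps : all prime ps by case/andP: hpr.
have pp : prime p by case/andP: hpr.
have hmin q : q \in ps -> (p < q)%N.
  by move=> hq; have /allP := order_path_min ltn_trans hs; apply.
have p0 : 0 < INR p by apply: INR_gt0; apply: prime_gt0.
have hef := mean_fac_pos p ha.
have c1 : 0 <= c / mean_fac a p.
  by apply: Rmult_le_pos => //; apply: Rlt_le; apply: Rinv_0_lt_compat.
have c2 : 0 <= c * a / mean_fac a p.
  by apply: Rmult_le_pos; [nra | apply: Rlt_le; apply: Rinv_0_lt_compat].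
have coprime_part : sqf_sum ps (fun n => indicator (exceeds (p :: ps) a c lam n) * / INR n)
    <= c / mean_fac a p / lam * prodR ps (fun p => 1 + / INR p).
  apply: Rle_trans (IH (path_sorted hs) hps _ c1); apply: sqf_sum_le => // n hn.
  apply: Rmult_le_compat_r; first exact: inv_INR_ge0.
  apply: indicator_imp; apply: exceeds_cons_coprime => //.
  by apply/negP => pn; have := hmin p (hn p pp pn); rewrite ltnn.
have multiple_part :
    sqf_sum ps (fun n => indicator (exceeds (p :: ps) a c lam (p * n)) * / INR (p * n))
    <= / INR p * (c * a / mean_fac a p / lam * prodR ps (fun p => 1 + / INR p)).
  have hp := Rlt_le _ _ (Rinv_0_lt_compat _ p0).
  apply: Rle_trans (Rmult_le_compat_l _ _ _ hp (IH (path_sorted hs) hps _ c2)).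
  rewrite -sqf_sum_scale; apply: sqf_sum_le => // n hn.
  rewrite INR_muln Rinv_mult -Rmult_assoc (Rmult_comm (indicator _)) Rmult_assoc.
  apply: Rmult_le_compat_l => //; apply: Rmult_le_compat_r; first exact: inv_INR_ge0.
  by apply: indicator_imp; apply: exceeds_cons_mul.
have e : 1 + / INR p = (1 + a / INR p) / mean_fac a p.
  by rewrite mean_fac_identity //; field; lra.
rewrite /= [in X in _ <= X]e; move: coprime_part multiple_part.
set P := prodR ps _; set S1 := sqf_sum ps _; set S2 := sqf_sum ps _ => h1 h2.
suff -> : c / lam * ((1 + a / INR p) / mean_fac a p * P)
  = c / mean_fac a p / lam * P + / INR p * (c * a / mean_fac a p / lam * P) by lra.
by field; lra.
Qed.

Lemma prod_below_mean_pos ps y a : 1 <= a -> 0 < prod_below ps y (mean_fac a).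
Proof.
move=> ha; elim: ps => [|q ps IH] /=; first lra.
by have := mean_fac_pos q ha; case: (below q y) => h; apply: Rmult_lt_0_compat; lra.
Qed.

Lemma prod_below_mart ps y a n : 1 <= a ->
  prod_below ps y (mart_fac a n) * prod_below ps y (mean_fac a)
  = a ^ count (fun q => below q y && (q %| n)%N) ps.
Proof.
move=> ha; elim: ps => [|q ps IH] /=; first lra.
have hef := mean_fac_pos q ha.
rewrite pow_add -IH; case: (below q y) => /=; last ring.
by rewrite /mart_fac; case: (q %| n)%N => /=; field; lra.
Qed.

Lemma prod_below_mean_le ps y a : 1 <= a -> all prime ps ->
  prod_below ps y (mean_fac a)
  <= exp ((a - 1) * sumR (filter (fun q => below q y) ps) (fun q => / INR q)).
Proof.
move=> ha; elim: ps => [|q ps IH] /=; first by rewrite Rmult_0_r exp_0; lra.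
case/andP=> pq /IH {}IH.
have q0 : 0 < INR q by apply: INR_gt0; apply: prime_gt0.
have hP := prod_below_mean_pos ps y ha.
case: (below q y) => /=; last lra.
rewrite Rmult_plus_distr_l exp_plus.
apply: Rmult_le_compat => //; [exact: Rlt_le (mean_fac_pos q ha) | lra |].
have : (a - 1) / (INR q + 1) <= (a - 1) * / INR q.
  by apply: Rmult_le_compat_l; [lra | apply: Rinv_le_contravar; lra].
by have := exp_ineq1_le ((a - 1) * / INR q); rewrite /mean_fac; lra.
Qed.

Lemma tau_part_lt n y : (0 < n)%N ->
  tau (part_lt n y) = (2 ^ count (fun q => below q y) (primes n))%N.
Proof.
move=> n0; rewrite /part_lt -(big_filter _ (fun q => below q y)) /= tau_prod.
- by rewrite size_filter.
- exact: filter_uniq (primes_uniq n).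
by apply/allP => q; rewrite mem_filter mem_primes => /andP[_ /andP[]].
Qed.

Lemma count_primes_supported n y ps : uniq ps -> all prime ps -> (0 < n)%N ->
  supported_on ps n ->
  count (fun q => below q y && (q %| n)) ps = count (fun q => below q y) (primes n).
Proof.
move=> ups pps n0 hn; rewrite -count_filter.
suff /permP -> : perm_eq (filter (fun q => q %| n) ps) (primes n) by [].
apply: uniq_perm; [exact: filter_uniq | exact: primes_uniq | ].
move=> q; rewrite mem_filter mem_primes n0 /=; apply/idP/idP.
  by case/andP=> h1 h2; rewrite h1 (allP pps q h2).
by case/andP=> h1 h2; rewrite h2 (hn q h1 h2).
Qed.

Definition c0 := ln 4 - 1.

Lemma ln4 : ln 4 = 2 * ln 2.
Proof. by rewrite (_ : 4 = 2 * 2) ?ln_mult; lra. Qed.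

(* ln 2 > 3/5, from exp (1/5) <= 1/(1 - 1/5) = 5/4 and (5/4)^3 < 2. *)
Lemma ln2_gt : 3 / 5 < ln 2.
Proof.
have h1 : exp (1/5) <= 5/4.
  have h := exp_ineq1_le (- (1/5)); rewrite exp_Ropp in h.
  have hp := exp_pos (1/5).
  apply: (Rmult_le_reg_r (/ exp (1/5))); first exact: Rinv_0_lt_compat.
  by rewrite Rinv_r; lra.
have h3 : exp (3/5) = exp (1/5) * exp (1/5) * exp (1/5).
  by rewrite -!exp_plus; f_equal; lra.
have hp := exp_pos (1/5).
have : exp (3/5) < 2 by rewrite h3; nra.
by move=> h; rewrite -(ln_exp (3/5)); apply: ln_increasing => //; apply: exp_pos.
Qed.

Lemma c0_bounds : 1/5 <= c0 <= 1.
Proof. by rewrite /c0 ln4; have := ln2_gt; have := ln2_lt1; lra. Qed.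

(* Second-order upper bound for exp, from exp (-z) >= 1 - z. *)
Lemma exp_quad z : z <= 1/2 -> exp z <= 1 + z + 2 * z ^ 2.
Proof.
move=> hz; have h := exp_ineq1_le (- z); rewrite exp_Ropp in h.
have hp := exp_pos z.
have h1 : (1 - z) * exp z <= 1.
  by have := Rmult_le_compat_r (exp z) _ _ (Rlt_le _ _ hp) h; rewrite Rinv_l; lra.
have h2 : 0 <= z ^ 2 * (1 - 2 * z) by apply: Rmult_le_pos; [apply: pow2_ge_0 | lra].
have h3 : (1 - z) * (1 + z + 2 * z ^ 2) = 1 + z ^ 2 * (1 - 2 * z) by ring.
nra.
Qed.

Definition pow2R (s : R) := exp (s * ln 2).

Lemma pow2R_ge1 s : 0 <= s -> 1 <= pow2R s.
Proof.
move=> hs; rewrite /pow2R -exp_0; apply: exp_le.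
by apply: Rmult_le_pos; [lra | have := ln2_pos; lra].
Qed.

Lemma pow2R_le4 s : s <= 2 -> pow2R s <= 4.
Proof.
move=> hs; rewrite /pow2R -(exp_ln 4); last lra.
by apply: exp_le; rewrite ln4; have := ln2_pos; nra.
Qed.

Lemma pow2R_quad sg : - (1/8) <= sg <= 1/8 ->
  pow2R (1 + sg) - 1 - (1 + sg) <= c0 * sg + 4 * sg ^ 2.
Proof.
move=> hs; rewrite /pow2R Rmult_plus_distr_r Rmult_1_l exp_plus exp_ln; last lra.
have l2 := ln2_pos; have l1 := ln2_lt1.
have := @exp_quad (sg * ln 2) ltac:(nra).
rewrite /c0 ln4.
have : (sg * ln 2) ^ 2 <= sg ^ 2.
  rewrite Rpow_mult_distr; have : ln 2 ^ 2 <= 1 by nra.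
  by have := pow2_ge_0 sg; nra.
nra.
Qed.

Lemma pow2R_half : pow2R (1/2) <= 14143 / 10000.
Proof.
have e : pow2R (1/2) * pow2R (1/2) = 2.
  by rewrite /pow2R -exp_plus (_ : 1/2 * ln 2 + 1/2 * ln 2 = ln 2) ?exp_ln; lra.
by have := exp_pos (1/2 * ln 2); rewrite /pow2R in e *; nra.
Qed.

Definition delta0 : R := 1 / 25000.

Lemma Log2_ge1 y : 1 <= Log2 y.
Proof. exact: Log_ge1. Qed.

Lemma lnLog_le_Log2 y : ln (Log y) <= Log2 y.
Proof. exact: Rmax_r. Qed.

Lemma Log_sub1_le_ln z : 0 <= ln z -> Log z - 1 <= ln z.
Proof.
move=> hz; rewrite /Log.
by case: (Rle_lt_dec 1 (ln z)) => h; [rewrite Rmax_right | rewrite Rmax_left]; lra.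
Qed.

Lemma Log2_sub1_le_lnLog y : Log2 y - 1 <= ln (Log y).
Proof. exact: Log_sub1_le_ln (lnLog_ge0 y). Qed.

Lemma lnA_bounds A : 1 <= A -> 0 <= ln A /\ ln A <= Log A /\ Log A - 1 <= ln A.
Proof.
move=> hA; have h0 : 0 <= ln A by rewrite -ln_1; apply: ln_le; lra.
by split => //; split; [apply: Rmax_r | apply: Log_sub1_le_ln].
Qed.

Lemma fA_props A y : 1 <= A ->
  0 <= fA delta0 A y /\
  fA delta0 A y <= delta0 * ((Log2 y - Log A / c0) ^ 2 / Log A) /\
  fA delta0 A y <= delta0 * (Log A + Log2 y).
Proof.
move=> hA; rewrite /fA -/c0.
have hL := Log_ge1 A; have ht := Log2_ge1 y.
have hd : 0 < delta0 by rewrite /delta0; lra.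
have q0 : 0 <= (Log2 y - Log A / c0) ^ 2 / Log A.
  by apply: Rmult_le_pos; [apply: pow2_ge_0 | apply: Rlt_le; apply: Rinv_0_lt_compat; lra].
split; last split.
- by apply: Rmult_le_pos; [lra | apply: Rmin_glb; lra].
- by apply: Rmult_le_compat_l; [lra | apply: Rmin_l].
- by apply: Rmult_le_compat_l; [lra | apply: Rmin_r].
Qed.

(* The tilt condition for an exponent s and a gain g at scale y: if n is
   exceptional at y, it forces the martingale with parameter 2^s to exceed
   A e^g (see [exceptional_exceeds] below). *)
Definition tilt_ok (s g A y : R) : Prop :=
  ln A + g <= s * (ln A - fA delta0 A y + Log2 y - 1) - (pow2R s - 1) * (Log2 y + mertens_const).

Lemma tilt_far A y : 1 <= A -> 7 * Log A <= Log2 y ->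
  tilt_ok (1/2) (- 1 - mertens_const) A y.
Proof.
move=> hA ht; rewrite /tilt_ok.
have [l0 [l1 l2]] := lnA_bounds hA.
have [f0 [f1 f2]] := fA_props y hA.
have hB := mertens_const_ge0.
have ha := pow2R_half; have ha1 := pow2R_ge1 (ltac:(lra) : 0 <= 1/2).
have ht1 := Log2_ge1 y.
have : (pow2R (1/2) - 1) * Log2 y <= 4143/10000 * Log2 y by apply: Rmult_le_compat_r; lra.
have : (pow2R (1/2) - 1) * mertens_const <= mertens_const by nra.
move: f0 f1 f2; set f := fA delta0 A y; rewrite /delta0; lra.
Qed.

(* Middle range Log2 y <= 7 Log A: Log2 y - Log A / c0 is cut into bands of
   width sqrt (Log A); in band k on side sg = +-1 the exponent
   1 - sg * theta A k works with gain gamma k^2 - 3 - 3B. *)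
Definition kappa : R := c0 / 56.
Definition gamma : R := c0 ^ 2 / 224.
Definition theta (A : R) (k : nat) : R := kappa * INR k / sqrt (Log A).
Definition band_exponent (A : R) (k : nat) (sg : R) : R := 1 + (- sg * theta A k).
Definition band_gain (k : nat) : R := gamma * INR k ^ 2 - 3 - 3 * mertens_const.

Lemma sqrt_Log_pos A : 0 < sqrt (Log A).
Proof. by apply: sqrt_lt_R0; have := Log_ge1 A; lra. Qed.

Lemma theta_scale A k : theta A k * sqrt (Log A) = kappa * INR k.
Proof. by rewrite /theta; field; have := sqrt_Log_pos A; lra. Qed.

Lemma theta_bounds A k : INR k * sqrt (Log A) <= 7 * Log A -> 0 <= theta A k <= 1/8.
Proof.
move=> hk; have sL := sqrt_Log_pos A.
have sL2 : sqrt (Log A) * sqrt (Log A) = Log A by apply: sqrt_sqrt; have := Log_ge1 A; lra.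
have [c0l c0u] := c0_bounds; have k0 := pos_INR k.
have kr : INR k <= 7 * sqrt (Log A) by apply: (Rmult_le_reg_r (sqrt (Log A))) => //; nra.
have := theta_scale A k; rewrite /kappa => e.
by split; apply: (Rmult_le_reg_r (sqrt (Log A))) => //; rewrite e; nra.
Qed.

Lemma band_fA_le A y k sg : 1 <= A -> (sg = 1 \/ sg = -1) ->
  INR k * sqrt (Log A) <= sg * (Log2 y - Log A / c0) < (INR k + 1) * sqrt (Log A) ->
  fA delta0 A y <= delta0 * (2 * INR k ^ 2 + 2).
Proof.
move=> hA hsg [hk1 hk2]; have [_ [f1 _]] := fA_props y hA.
apply: Rle_trans f1 _; apply: Rmult_le_compat_l; first by rewrite /delta0; lra.
have hL := Log_ge1 A; have sL := sqrt_Log_pos A.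
have sL2 : sqrt (Log A) * sqrt (Log A) = Log A by apply: sqrt_sqrt; lra.
have k0 := pos_INR k.
set v := sg * _ in hk1 hk2.
have -> : (Log2 y - Log A / c0) ^ 2 = v ^ 2 by rewrite /v; case: hsg => ->; ring.
have v0 : 0 <= v by have := Rmult_le_pos _ _ k0 (Rlt_le _ _ sL); lra.
have k1 : 0 <= INR k + 1 by lra.
have : v ^ 2 <= (INR k + 1) ^ 2 * Log A by rewrite -[X in _ <= _ * X]sL2; nra.
move=> h; have : v ^ 2 / Log A <= (INR k + 1) ^ 2.
  by apply: (Rmult_le_reg_r (Log A)); [lra | rewrite /Rdiv Rmult_assoc Rinv_l; lra].
by have := pow2_ge_0 (INR k - 1); nra.
Qed.

Lemma tilt_band A y k sg : 1 <= A -> Log2 y <= 7 * Log A -> (sg = 1 \/ sg = -1) ->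
  INR k * sqrt (Log A) <= sg * (Log2 y - Log A / c0) < (INR k + 1) * sqrt (Log A) ->
  tilt_ok (band_exponent A k sg) (band_gain k) A y.
Proof.
move=> hA ht hsg hband; have fk := band_fA_le hA hsg hband.
have [hk1 _] := hband; rewrite /tilt_ok /band_exponent /band_gain.
have [l0 [l1 l2]] := lnA_bounds hA; have [f0 _] := fA_props y hA.
have hB := mertens_const_ge0; have [c0l c0u] := c0_bounds.
have ht1 := Log2_ge1 y; have sL := sqrt_Log_pos A; have k0 := pos_INR k.
have sL2 : sqrt (Log A) * sqrt (Log A) = Log A by apply: sqrt_sqrt; have := Log_ge1 A; lra.
have Lc : Log A / c0 <= 5 * Log A.
  by apply: (Rmult_le_reg_r c0); [lra | rewrite /Rdiv Rmult_assoc Rinv_l; nra].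
have Lc0 : 0 <= Log A / c0.
  by apply: Rmult_le_pos; [lra | apply: Rlt_le; apply: Rinv_0_lt_compat; lra].
have hv7 : sg * (Log2 y - Log A / c0) <= 7 * Log A by case: hsg => ->; lra.
have [th0 th8] := @theta_bounds A k ltac:(lra).
have thr := theta_scale A k.
set t := Log2 y in ht ht1 hk1 hv7 fk *; set L := Log A in ht l1 l2 sL2 Lc Lc0 hk1 hv7 thr *.
set r := sqrt L in sL sL2 hk1 thr; set th := theta A k in th0 th8 thr *.
set f := fA delta0 A y in f0 fk *; set sgm := - sg * th.
have sgm_b : - th <= sgm <= th by rewrite /sgm; case: hsg => ->; lra.
have sgm2 : sgm ^ 2 = th ^ 2 by rewrite /sgm; case: hsg => ->; ring.
have Fa := @pow2R_quad sgm ltac:(lra).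
have a4 := @pow2R_le4 (1 + sgm) ltac:(lra).
have a1 := @pow2R_ge1 (1 + sgm) ltac:(lra).
set a := pow2R (1 + sgm) in Fa a4 a1 *.
have F_at : (a - 1 - (1 + sgm)) * t <= (c0 * sgm + 4 * sgm ^ 2) * t.
  by apply: Rmult_le_compat_r; lra.
have F_sl : sgm * ln A >= sgm * L - th by nra.
(* the linear term of the tilt gains c0 * theta * |u| >= c0^2 k^2 / 56 *)
have F_lin : sgm * L - c0 * sgm * t >= c0 ^ 2 / 56 * INR k ^ 2.
  have -> : sgm * L - c0 * sgm * t = c0 * th * (sg * (t - L / c0)).
    by rewrite /sgm; field_simplify; [case: hsg => ->; field | lra].
  have : th * (INR k * r) = kappa * INR k ^ 2.
    by transitivity (th * r * INR k); [ring | rewrite thr; ring].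
  move=> e; have := Rmult_le_compat_l _ _ _ th0 hk1; rewrite e /kappa => h.
  have := Rmult_le_compat_l _ _ _ (ltac:(lra) : 0 <= c0) h.
  by rewrite -Rmult_assoc; lra.
(* the quadratic term costs at most c0^2 k^2 / 448 *)
have F_quad : sgm ^ 2 * t <= c0 ^ 2 / 448 * INR k ^ 2.
  rewrite sgm2; have : th ^ 2 * L = kappa ^ 2 * INR k ^ 2.
    by rewrite -sL2; transitivity ((th * r) ^ 2); [ring | rewrite thr; ring].
  rewrite /kappa => e; have := Rmult_le_compat_l _ _ _ (pow2_ge_0 th) ht; lra.
have F_sf : sgm * f <= f / 8 by nra.
have F_aB : (a - 1) * mertens_const <= 3 * mertens_const by nra.
have c2 : 1 / 25 <= c0 ^ 2 by nra.
have := Rmult_le_compat_r _ _ _ (pow2_ge_0 (INR k)) c2.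
rewrite /gamma /delta0 in fk *; lra.
Qed.

Definition exceptional_at (A : R) (n : nat) (y : R) : Prop :=
  A * exp (- fA delta0 A y) * Log y < INR (tau (part_lt n y)).

Lemma exceptional_omega A y n : 1 <= A -> (0 < n)%N -> exceptional_at A n y ->
  ln A - fA delta0 A y + Log2 y - 1
  <= INR (count (fun q => below q y) (primes n)) * ln 2.
Proof.
move=> hA n0 hbad; have hLy := Log_ge1 y.
have hT0 : 0 < A * exp (- fA delta0 A y) * Log y.
  by apply: Rmult_lt_0_compat; [apply: Rmult_lt_0_compat; [lra | apply: exp_pos] | lra].
have := ln_increasing _ _ hT0 hbad.
rewrite tau_part_lt // INR_expn ln_pow /=; last lra.
rewrite ln_mult ?ln_mult ?ln_exp; try lra; try apply: exp_pos;
  try (apply: Rmult_lt_0_compat; [lra | apply: exp_pos]).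
by rewrite (_ : 1 + 1 = 2); have := Log2_sub1_le_lnLog y; lra.
Qed.

Lemma exceptional_exceeds A y s g ps n : 1 <= A -> 1 <= y -> 0 < s <= 2 ->
  uniq ps -> all prime ps -> supported_on ps n -> (0 < n)%N ->
  exceptional_at A n y -> tilt_ok s g A y ->
  exp (ln A + g) <= prod_below ps y (mart_fac (pow2R s) n).
Proof.
move=> hA hy hs ups pps hn n0 hbad hc.
have a1 : 1 <= pow2R s by apply: pow2R_ge1; lra.
have hk := exceptional_omega hA n0 hbad.
have hdec := prod_below_mart ps y n a1.
rewrite (count_primes_supported y ups pps n0 hn) in hdec.
have hpos := prod_below_mean_pos ps y a1.
have hmean : prod_below ps y (mean_fac (pow2R s)) <= exp ((pow2R s - 1) * (Log2 y + mertens_const)).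
  apply: Rle_trans (prod_below_mean_le y a1 pps) _; apply: exp_le.
  apply: Rmult_le_compat_l; first lra.
  have := lnLog_le_Log2 y; suff : sumR [seq q <- ps | below q y] (fun q => / INR q)
    <= ln (Log y) + mertens_const by lra.
  apply: sum_inv_primes_below => //; first exact: filter_uniq.
  move=> q; rewrite mem_filter => /andP[/belowP h1 h2].
  by split; first exact: (allP pps q h2).
have : exp (ln A + g) * exp ((pow2R s - 1) * (Log2 y + mertens_const))
       <= pow2R s ^ count (fun q => below q y) (primes n).
  rewrite -exp_plus [pow2R s ^ _]exp_pow_nat; apply: exp_le.
  rewrite /tilt_ok in hc; have := Rmult_le_compat_l _ _ _ (ltac:(lra) : 0 <= s) hk; lra.
rewrite -hdec => h; apply: (Rmult_le_reg_r _ _ _ hpos).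
by apply: Rle_trans h; apply: Rmult_le_compat_l => //; apply: Rlt_le; apply: exp_pos.
Qed.

Definition event_far (A : R) (ps : seq nat) (n : nat) : Prop :=
  exceeds ps (pow2R (1/2)) 1 (exp (ln A + (- 1 - mertens_const))) n.
Definition event_band (A : R) (ps : seq nat) (k : nat) (sg : R) (n : nat) : Prop :=
  exceeds ps (pow2R (band_exponent A k sg)) 1 (exp (ln A + band_gain k)) n.

Lemma band_index u A : 0 <= u -> exists k : nat,
  INR k * sqrt (Log A) <= u < (INR k + 1) * sqrt (Log A).
Proof.
move=> hu; have sL := sqrt_Log_pos A.
have [k [hk1 hk2]] := floor_ex (Rmult_le_pos _ _ hu (Rlt_le _ _ (Rinv_0_lt_compat _ sL))).
exists k; split.
  by apply: Rle_trans (Rmult_le_compat_r _ _ _ (Rlt_le _ _ sL) hk1) _; right; field; lra.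
by have := Rmult_lt_compat_r _ _ _ sL hk2; rewrite /Rdiv Rmult_assoc Rinv_l; lra.
Qed.

Lemma exceptional_in_events A ps K n y : 1 <= A -> 1 <= y -> uniq ps -> all prime ps ->
  supported_on ps n -> (0 < n)%N -> 7 * sqrt (Log A) < INR K ->
  exceptional_at A n y ->
  event_far A ps n \/ exists k, (k < K)%N /\ (event_band A ps k 1 n \/ event_band A ps k (-1) n).
Proof.
move=> hA hy ups pps hn n0 hK hbad.
have hL := Log_ge1 A; have [c0l c0u] := c0_bounds; have sL := sqrt_Log_pos A.
have sL2 : sqrt (Log A) * sqrt (Log A) = Log A by apply: sqrt_sqrt; lra.
have ht1 := Log2_ge1 y.
case: (Rle_lt_dec (7 * Log A) (Log2 y)) => ht.
  left; exists y; rewrite Rmult_1_l.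
  by apply: (exceptional_exceeds (s := 1/2)) => //; [lra | exact: tilt_far].
right.
have Lc : Log A / c0 <= 5 * Log A.
  by apply: (Rmult_le_reg_r c0); [lra | rewrite /Rdiv Rmult_assoc Rinv_l; nra].
have Lc0 : 0 <= Log A / c0.
  by apply: Rmult_le_pos; [lra | apply: Rlt_le; apply: Rinv_0_lt_compat; lra].
have side sg : (sg = 1 \/ sg = -1) -> 0 <= sg * (Log2 y - Log A / c0) ->
    exists k, (k < K)%N /\ event_band A ps k sg n.
  move=> hsg v0; have [k hk] := band_index A v0.
  have hk7 : INR k * sqrt (Log A) <= 7 * Log A by case: hsg hk => -> [? ?]; lra.
  exists k; split.
    have : INR k < INR K by apply: Rle_lt_trans hK; apply: (Rmult_le_reg_r _ _ _ sL); nra.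
    by move/INR_lt/ltP.
  exists y; rewrite Rmult_1_l.
  have [th0 th8] := theta_bounds hk7.
  apply: (exceptional_exceeds (s := band_exponent A k sg)) => //.
  - by rewrite /band_exponent; case: hsg => ->; lra.
  - by apply: tilt_band => //; lra.
case: (Rle_lt_dec 0 (Log2 y - Log A / c0)) => hu.
  by have [k [hk hE]] := side 1 (or_introl erefl) ltac:(lra); exists k; split => //; left.
by have [k [hk hE]] := side (-1) (or_intror erefl) ltac:(lra); exists k; split => //; right.
Qed.

Definition exceptional (A x : R) (n : nat) : Prop :=
  exists y, (1 <= y <= x) /\ exceptional_at A n y.

Lemma not_S_A_exceptional A x n : S_lt x n -> ~ S_A_lt delta0 A x n -> exceptional A x n.
Proof.
move=> hS hn; apply: NNPP => hb; apply: hn; split => // y hy.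
by apply: Rnot_lt_le => hl; apply: hb; exists y.
Qed.

Lemma exc_sum_le_sqf_sum A x ps : uniq ps -> all prime ps ->
  (forall q, prime q -> INR q < x -> q \in ps) ->
  exc_sum delta0 A x <= sqf_sum ps (fun n => indicator (exceptional A x n) * / INR n).
Proof.
move=> ups pps hps; rewrite /exc_sum foldr_sumR.
set l := filter _ _.
have hl n : n \in l -> S_lt x n /\ ~ S_A_lt delta0 A x n.
  by rewrite mem_filter => /andP[/asboolP h _].
rewrite (@sumR_ext_in l _ (fun n => indicator (exceptional A x n) * / INR n)); last first.
  move=> n nl; have [h1 h2] := hl n nl.
  by rewrite indicator_T ?Rmult_1_l //; exact: not_S_A_exceptional.
apply: sumR_le_sqf_sum => //.
- exact: filter_uniq (iota_uniq _ _).
- move=> n nl; have [[sq hq] _] := hl n nl; split => // q pq qn.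
  by apply: hps => //; apply: hq.
- by move=> n; apply: Rmult_le_pos; [apply: indicator_ge0 | apply: inv_INR_ge0].
Qed.

Section ExceptionalWeight.
Variables (A x : R) (ps : seq nat) (K : nat).
Hypotheses (hA : 1 <= A) (ups : uniq ps) (pps : all prime ps).
Hypothesis hK : 7 * sqrt (Log A) < INR K.

Let weight (E : nat -> Prop) : R := sqf_sum ps (fun n => indicator (E n) * / INR n).

Let weight_ge0 (P : Prop) n : 0 <= indicator P * / INR n.
Proof. by apply: Rmult_le_pos; [apply: indicator_ge0 | apply: inv_INR_ge0]. Qed.

Let h (k n : nat) : R := indicator (event_band A ps k 1 n) * / INR n
                       + indicator (event_band A ps k (-1) n) * / INR n.

Lemma exceptional_weight_le :
  weight (exceptional A x) <= weight (event_far A ps) +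
    sumR (iota 0 K) (fun k => weight (event_band A ps k 1) + weight (event_band A ps k (-1))).
Proof.
have hh k n : 0 <= h k n by apply: Rplus_le_le_0_compat; apply: weight_ge0.
apply: (@Rle_trans _ (sqf_sum ps (fun n =>
  indicator (event_far A ps n) * / INR n + sumR (iota 0 K) (fun k => h k n)))).
  apply: sqf_sum_le => // -[|n] hn.
    rewrite /= Rinv_0 !Rmult_0_r.
    by rewrite Rplus_0_l; apply: sumR_ge0 => k _; apply: hh.
  have hS := @sumR_ge0 (iota 0 K) (fun k : nat => h k n.+1) (fun k _ => hh k n.+1).
  have hR := weight_ge0 (event_far A ps n.+1) n.+1.
  have [hb|nb] := pselect (exceptional A x n.+1); last first.
    by rewrite indicator_F // Rmult_0_l; exact: Rplus_le_le_0_compat hR hS.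
  rewrite (indicator_T hb) Rmult_1_l; case: hb => y [[y1 _] hy].
  case: (exceptional_in_events hA y1 ups pps hn (ltn0Sn n) hK hy) => [hE|[k [hk hE]]].
    by rewrite indicator_T // Rmult_1_l; lra.
  have : h k n.+1 <= sumR (iota 0 K) (fun k => h k n.+1).
    rewrite (@sumR_rem k); last by rewrite mem_iota.
    by have := @sumR_ge0 (rem k (iota 0 K)) (fun k : nat => h k n.+1) (fun k _ => hh k n.+1); lra.
  have := weight_ge0 (event_band A ps k 1 n.+1) n.+1.
  have := weight_ge0 (event_band A ps k (-1) n.+1) n.+1.
  by rewrite /h; case: hE => hE; rewrite (indicator_T hE) Rmult_1_l; lra.
rewrite sqf_sum_add sqf_sum_sumR; apply: Rplus_le_compat_l.
by apply: sumR_le => k _; rewrite /h sqf_sum_add; right.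
Qed.
End ExceptionalWeight.

Lemma inv_exp_lnA A g : 1 <= A -> 1 / exp (ln A + g) = exp (- g) / A.
Proof.
move=> hA; rewrite exp_plus exp_ln; last lra.
by rewrite exp_Ropp; have := exp_pos g; move=> h; field; lra.
Qed.

Lemma gamma_pos : 0 < gamma.
Proof. by rewrite /gamma; have [h1 h2] := c0_bounds; nra. Qed.

Section EventWeights.
Variables (A : R) (ps : seq nat).
Hypotheses (hA : 1 <= A) (sps : sorted ltn ps) (pps : all prime ps).

Let P := prodR ps (fun p => 1 + / INR p).

Lemma far_weight_le :
  sqf_sum ps (fun n => indicator (event_far A ps n) * / INR n)
  <= exp (1 + mertens_const) / A * P.
Proof.
have ha : 1 <= pow2R (1/2) by apply: pow2R_ge1; lra.
apply: Rle_trans (maximal_inequality sps pps ha (exp_pos _) Rle_0_1) _.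
by rewrite inv_exp_lnA // (_ : - (-1 - mertens_const) = 1 + mertens_const); [right | ring].
Qed.

(* The maximal inequality applied to a band-k martingale: the gain
   gamma k^2 makes these weights decay geometrically in k. *)
Lemma band_weight_le k sg : (sg = 1 \/ sg = -1) ->
  INR k * sqrt (Log A) <= 7 * Log A ->
  sqf_sum ps (fun n => indicator (event_band A ps k sg n) * / INR n)
  <= exp (3 + 3 * mertens_const) * exp (- gamma) ^ k / A * P.
Proof.
move=> hsg hk; have [t0 t1] := theta_bounds hk.
have hs : 0 <= band_exponent A k sg by rewrite /band_exponent; case: hsg => ->; lra.
apply: Rle_trans (maximal_inequality sps pps (pow2R_ge1 hs) (exp_pos _) Rle_0_1) _.
rewrite inv_exp_lnA //; apply: Rmult_le_compat_r; first by have := prodR_ge1 pps; lra.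
apply: Rmult_le_compat_r; first by apply: Rlt_le; apply: Rinv_0_lt_compat; lra.
rewrite exp_pow_nat -exp_plus; apply: exp_le; rewrite /band_gain.
have := gamma_pos; have k0 := pos_INR k.
by have := INR_le_sq k; nra.
Qed.
End EventWeights.

Definition exceptional_const : R :=
  exp (1 + mertens_const) + 2 * exp (3 + 3 * mertens_const) / (1 - exp (- gamma)).

Lemma exp_neg_gamma_lt1 : 0 <= exp (- gamma) < 1.
Proof.
split; first exact: Rlt_le (exp_pos _).
by rewrite -exp_0; apply: exp_increasing; have := gamma_pos; lra.
Qed.

Lemma exceptional_const_pos : 0 < exceptional_const.
Proof.
have [_ q1] := exp_neg_gamma_lt1.
have := exp_pos (1 + mertens_const); have := exp_pos (3 + 3 * mertens_const).
have : 0 < / (1 - exp (- gamma)) by apply: Rinv_0_lt_compat; lra.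
by rewrite /exceptional_const /Rdiv; nra.
Qed.

Lemma exceptional_weight_bound A x ps K : 1 <= A -> uniq ps -> sorted ltn ps ->
  all prime ps -> 7 * sqrt (Log A) < INR K ->
  (forall k, (k < K)%N -> INR k * sqrt (Log A) <= 7 * Log A) ->
  sqf_sum ps (fun n => indicator (exceptional A x n) * / INR n)
  <= exceptional_const / A * prodR ps (fun p => 1 + / INR p).
Proof.
move=> hA ups sps pps hK hk7.
set P := prodR ps _; set q := exp (- gamma); set c := exp (3 + 3 * mertens_const) / A * P.
have [q0 q1] := exp_neg_gamma_lt1; have hP : 1 <= P := prodR_ge1 pps.
have c0 : 0 <= c.
  apply: Rmult_le_pos; last lra.
  by apply: Rmult_le_pos; [exact: Rlt_le (exp_pos _) | apply: Rlt_le; apply: Rinv_0_lt_compat; lra].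
apply: Rle_trans (exceptional_weight_le x hA ups pps hK) _.
have hbands : sumR (iota 0 K) (fun k =>
      sqf_sum ps (fun n => indicator (event_band A ps k 1 n) * / INR n) +
      sqf_sum ps (fun n => indicator (event_band A ps k (-1) n) * / INR n))
    <= 2 * c * / (1 - q).
  apply: Rle_trans (_ : sumR (iota 0 K) (fun k => 2 * c * q ^ k) <= _).
    apply: sumR_le => k; rewrite mem_iota add0n => /andP[_ /hk7 hk].
    have h1 := band_weight_le hA sps pps (or_introl erefl) hk.
    have h2 := band_weight_le hA sps pps (or_intror erefl) hk.
    by rewrite /c; move: h1 h2; rewrite -/q -/P /Rdiv; lra.
  rewrite sumR_scale; apply: Rmult_le_compat_l; first lra.
  exact: sumR_geom.
have := far_weight_le hA sps pps.
by rewrite /exceptional_const /c /P /q /Rdiv in hbands *; lra.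
Qed.

Definition primes_below (x : R) : seq nat :=
  filter (fun r => prime r && below r x) (iota 0 (Z.to_nat (up x))).

Lemma primes_below_sorted x : sorted ltn (primes_below x).
Proof. exact: sorted_filter ltn_trans _ _ (iota_ltn_sorted _ _). Qed.

Lemma primes_below_uniq x : uniq (primes_below x).
Proof. exact: filter_uniq (iota_uniq _ _). Qed.

Lemma primes_below_prime x : all prime (primes_below x).
Proof. by apply/allP => q; rewrite mem_filter => /andP[/andP[]]. Qed.

Lemma mem_primes_below x q : 0 <= x -> (q \in primes_below x) <-> prime q /\ INR q < x.
Proof.
move=> hx; rewrite mem_filter; split.
  by case/andP=> /andP[pq /belowP qx] _.
case=> pq qx; rewrite pq; apply/andP; split; first exact/belowP.
rewrite mem_iota /= add0n.
have [h1 _] := archimed x; have hz : (0 <= up x)%Z by apply: le_IZR; lra.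
have : INR q < INR (Z.to_nat (up x)) by rewrite [INR (Z.to_nat _)]INR_IZR_INZ Z2Nat.id //; lra.
by move/INR_lt/ltP.
Qed.

Lemma euler_product_below x : 1 < x ->
  prodR (primes_below x) (fun p => 1 + / INR p) <= Log x * exp mertens_const.
Proof.
move=> hx; have mem q : q \in primes_below x -> prime q /\ INR q < x.
  by move/(mem_primes_below q (ltac:(lra) : 0 <= x)).
apply: Rle_trans (prodR_le_exp (primes_below_prime x)) _.
have : sumR (primes_below x) (fun q => / INR q) <= ln (Log x) + mertens_const.
  by apply: sum_inv_primes_below; [lra | exact: primes_below_uniq | exact: mem].
move=> /exp_le h; apply: Rle_trans h _.
by rewrite exp_plus exp_ln; [lra | have := Log_ge1 x; lra].
Qed.

Lemma band_count A : exists K : nat,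
  7 * sqrt (Log A) < INR K /\ forall k, (k < K)%N -> INR k * sqrt (Log A) <= 7 * Log A.
Proof.
have s0 := sqrt_pos (Log A).
have sL2 : sqrt (Log A) * sqrt (Log A) = Log A by apply: sqrt_sqrt; have := Log_ge1 A; lra.
have [K0 [hK0a hK0]] := floor_ex (Rmult_le_pos 7 _ ltac:(lra) s0).
exists K0.+1; split; first by rewrite S_INR.
move=> k hk; have : INR k <= INR K0 by apply: INR_leq; lia.
by nra.
Qed.

Theorem proposition5p1 :
  exists delta : R, 0 < delta /\
  exists C : R, 0 < C /\
  forall A x : R, 1 <= A -> 1 < x ->
    exc_sum delta A x <= C * Log x / A.
Proof.
exists delta0; split; first by rewrite /delta0; lra.
exists (exceptional_const * exp mertens_const); split.
  exact: Rmult_lt_0_compat exceptional_const_pos (exp_pos _).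
move=> A x hA hx; have [K [hK hk7]] := band_count A.
have hps q : prime q -> INR q < x -> q \in primes_below x.
  by move=> pq qx; apply/(mem_primes_below q (ltac:(lra) : 0 <= x)).
apply: Rle_trans (exc_sum_le_sqf_sum A (primes_below_uniq x) (primes_below_prime x) hps) _.
apply: Rle_trans (exceptional_weight_bound x hA (primes_below_uniq x)
  (primes_below_sorted x) (primes_below_prime x) hK hk7) _.
have hC : 0 <= exceptional_const / A.
  apply: Rmult_le_pos; first exact: Rlt_le exceptional_const_pos.
  by apply: Rlt_le; apply: Rinv_0_lt_compat; lra.
apply: Rle_trans (Rmult_le_compat_l _ _ _ hC (euler_product_below hx)) _.
by right; field; lra.
Qed.
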